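(* Let $f:[0,\infty)\to\mathbb{R}$ be differentiable, let $0<a<b<\infty$, and suppose $f'$ is Lebesgue integrable on $[a,b]$. Let $(\alpha,m)\in(0,1]^2$ and $q>1$, and suppose $|f'|^q$ is $(\alpha,m)$-GA-convex on $[0,\max\{a^{1/m},b\}]$. Then \[ \biggl|\frac{b^2f(b)-a^2f(a)}{2}-\int_a^b xf(x)\,dx\biggr|\le\frac{\ln b-\ln a}{2}\Bigl\{m\bigl[L(a^{3q},b^{3q})-G(\alpha,3q)\bigr]\bigl|f'(a^{1/m})\bigr|^q+G(\alpha,3q)|f'(b)|^q\Bigr\}^{1/q}. \]
   Context: For $c>0$, $h:[0,c]\to\mathbb{R}$ and $(\alpha,m)\in(0,1]^2$, $h$ is called $(\alpha,m)$-GA-convex on $[0,c]$ if $h\bigl(x^\lambda y^{m(1-\lambda)}\bigr)\le\lambda^\alpha h(x)+m(1-\lambda^\alpha)h(y)$ for all $x,y\in[0,c]$ and all $\lambda\in[0,1]$ (with the convention $0^0=1$). For fixed $0<a<b$ and $\ell\ge0$, $\alpha>0$, set $G(\alpha,\ell)=\int_0^1 t^\alpha a^{\ell(1-t)}b^{\ell t}\,dt$. For $x,y>0$, $x\neq y$, the logarithmic mean is $L(x,y)=\frac{y-x}{\ln y-\ln x}$. *)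

From Stdlib Require Import Reals Lra.
Open Scope R_scope.

(* Real power x^y for x >= 0, with the conventions 0^y = 0 for y <> 0
   and 0^0 = 1 (Stdlib's Rpower gives Rpower 0 y = 1, which is wrong). *)
Definition pw (x y : R) : R :=
  if Rlt_dec 0 x then Rpower x y
  else if Req_EM_T y 0 then 1 else 0.

Definition ga_convex (alpha m c : R) (h : R -> R) : Prop :=
  forall x y lam : R,
    0 <= x <= c -> 0 <= y <= c -> 0 <= lam <= 1 ->
    h (pw x lam * pw y (m * (1 - lam)))
      <= pw lam alpha * h x + m * (1 - pw lam alpha) * h y.

Definition logmean (x y : R) : R := (y - x) / (ln y - ln x).

Definition right_deriv (f : R -> R) (x l : R) : Prop :=
  forall eps : R, 0 < eps -> exists delta : R, 0 < delta /\
    forall h : R, 0 < h < delta -> Rabs ((f (x + h) - f x) / h - l) < eps.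

Definition diff_on_nonneg (f f' : R -> R) : Prop :=
  right_deriv f 0 (f' 0) /\ forall x : R, 0 < x -> derivable_pt_lim f x (f' x).

(* Integrand of G(alpha, l) = int_0^1 t^alpha a^(l(1-t)) b^(l t) dt. *)
Definition G_integrand (a b alpha l : R) (t : R) : R :=
  pw t alpha * Rpower a (l * (1 - t)) * Rpower b (l * t).

From Stdlib Require Import Reals Lra.
From Coquelicot Require Import Coquelicot.
Open Scope R_scope.

(* Along the geometric path x(t) = a^(1-t) b^t the left-hand side is
   ((ln b - ln a)/2) int_0^1 x^3 f'(x) dt, since
   (b^2 f(b) - a^2 f(a))/2 - int_a^b x f(x) dx = int_a^b x^2 f'(x)/2 dx.
   GA-convexity at the endpoints b and a^(1/m) gives
   |x^3 f'(x)|^q <= M(t) = x^(3q) (t^alpha |f'(b)|^q + m (1 - t^alpha) |f'(a^(1/m))|^q),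
   and int_0^1 M is the bracket on the right-hand side, so it remains to see
   int_0^1 M^(1/q) <= (int_0^1 M)^(1/q).  As f' need not be integrable, this
   is done with derivatives: for every u > 0 the tangent line of v |-> v^(1/q)
   at u bounds the integrand by the derivative of an explicit primitive, the
   mean value theorem integrates the comparison, and the infimum of the
   resulting bounds over u is (int_0^1 M)^(1/q). *)

Lemma Rpower_gt0 (x y : R) : 0 < Rpower x y.
Proof. apply exp_pos. Qed.

Lemma pw_Rpower (x y : R) : 0 < x -> pw x y = Rpower x y.
Proof. intros Hx; unfold pw; destruct (Rlt_dec 0 x); [reflexivity|lra]. Qed.

Lemma pw_nonpos (x y : R) : x <= 0 -> y <> 0 -> pw x y = 0.
Proof.
  intros Hx Hy; unfold pw.
  destruct (Rlt_dec 0 x); [lra|]. destruct (Req_EM_T y 0); [lra|reflexivity].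
Qed.

Lemma pw_ge0 (x y : R) : 0 <= pw x y.
Proof.
  unfold pw; destruct (Rlt_dec 0 x); [left; apply Rpower_gt0|].
  destruct (Req_EM_T y 0); lra.
Qed.

Lemma pw_mult (x y z : R) :
  0 <= x -> 0 <= y -> z <> 0 -> pw (x * y) z = pw x z * pw y z.
Proof.
  intros [Hx|<-] [Hy|<-] Hz.
  - rewrite !pw_Rpower by nra. now rewrite Rpower_mult_distr.
  - rewrite Rmult_0_r, !pw_nonpos by lra. ring.
  - rewrite Rmult_0_l, !pw_nonpos by lra. ring.
  - rewrite Rmult_0_l, !pw_nonpos by lra. ring.
Qed.

Lemma le_pw_inv (v N q : R) : 0 <= v -> 0 < q -> pw v q <= N -> v <= pw N (1 / q).
Proof.
  intros [Hv|<-] Hq HvN; [|apply pw_ge0].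
  rewrite pw_Rpower in HvN by lra.
  assert (HN : 0 < N) by (pose proof (Rpower_gt0 v q); lra).
  rewrite pw_Rpower by lra.
  apply Rle_trans with (Rpower (Rpower v q) (1 / q)).
  - rewrite Rpower_mult. replace (q * (1 / q)) with 1 by (field; lra).
    rewrite Rpower_1 by lra; lra.
  - apply Rle_Rpower_l; [left; apply Rdiv_lt_0_compat|split; [apply Rpower_gt0|]]; lra.
Qed.

Lemma mul_le_pw_inv (x v N q : R) : 0 < x -> 0 <= v -> 0 < q -> pw v q <= N ->
  0 <= Rpower x q * N /\ x * v <= pw (Rpower x q * N) (1 / q).
Proof.
  intros Hx Hv Hq HvN.
  assert (Hxv : pw (x * v) q <= Rpower x q * N).
  { rewrite pw_mult, pw_Rpower by lra.
    apply Rmult_le_compat_l; [left; apply Rpower_gt0|exact HvN]. }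
  split.
  - apply Rle_trans with (2 := Hxv), pw_ge0.
  - apply le_pw_inv; [apply Rmult_le_pos; lra|exact Hq|exact Hxv].
Qed.

Lemma continuity_pt_pw (y t : R) : 0 < y -> continuity_pt (fun x => pw x y) t.
Proof.
  intros Hy. destruct (Rtotal_order t 0) as [Ht|[->|Ht]].
  - apply continuity_pt_filterlim; change (continuous (fun x => pw x y) t).
    apply (continuous_ext_loc _ (fun _ => 0)).
    + apply locally_interval with m_infty (Finite 0); simpl; auto.
      intros x _ Hx; now rewrite pw_nonpos by lra.
    + apply continuous_const.
  - intros eps Heps. exists (Rpower eps (1 / y)). split; [apply Rpower_gt0|].
    intros x [_ Hx]. simpl in *. unfold R_dist in *.
    rewrite Rminus_0_r in Hx. rewrite (pw_nonpos 0), Rminus_0_r by lra.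
    destruct (Rle_dec x 0) as [Hx0|Hx0].
    + rewrite pw_nonpos, Rabs_R0 by lra; lra.
    + rewrite pw_Rpower, Rabs_pos_eq by (try left; try apply Rpower_gt0; lra).
      rewrite Rabs_pos_eq in Hx by lra.
      replace eps with (Rpower (Rpower eps (1 / y)) y).
      * apply Rlt_Rpower_l; lra.
      * rewrite Rpower_mult. replace (1 / y * y) with 1 by (field; lra).
        now apply Rpower_1.
  - apply continuity_pt_filterlim; change (continuous (fun x => pw x y) t).
    apply (continuous_ext_loc _ (fun x => exp (y * ln x))).
    + apply locally_interval with (Finite 0) p_infty; simpl; auto.
      intros x Hx _; now rewrite pw_Rpower by lra.
    + apply (ex_derive_continuous (V := R_NormedModule)). auto_derive. lra.
Qed.

Lemma exp_mul_le_convex (r d : R) : 0 <= r <= 1 -> exp (r * d) <= r * exp d + (1 - r).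
Proof.
  intros Hr.
  (* the tangent line of exp at r * d, evaluated at d and at 0 *)
  assert (E1 : exp d = exp (r * d) * exp ((1 - r) * d)).
  { rewrite <- exp_plus. f_equal. ring. }
  assert (E0 : 1 = exp (r * d) * exp (- (r * d))).
  { rewrite <- exp_plus, Rplus_opp_r, exp_0. reflexivity. }
  assert (Hcomb : 1 <= r * exp ((1 - r) * d) + (1 - r) * exp (- (r * d))).
  { pose proof (exp_ineq1_le ((1 - r) * d)). pose proof (exp_ineq1_le (- (r * d))). nra. }
  pose proof (exp_pos (r * d)).
  rewrite E1. rewrite E0 at 2. nra.
Qed.

Lemma pw_le_tangent (v u r : R) : 0 <= v -> 0 < u -> 0 < r <= 1 ->
  pw v r <= r * Rpower u (r - 1) * v + (1 - r) * Rpower u r.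
Proof.
  intros [Hv|<-] Hu Hr.
  - rewrite pw_Rpower by lra.
    assert (Hvu : Rpower v r = Rpower u r * exp (r * (ln v - ln u))).
    { unfold Rpower. rewrite <- exp_plus. f_equal. ring. }
    assert (Huv : Rpower u (r - 1) * v = Rpower u r * exp (ln v - ln u)).
    { unfold Rpower. rewrite <- exp_plus, <- (exp_ln v) at 1 by lra.
      rewrite <- exp_plus. f_equal. ring. }
    rewrite Hvu, Rmult_assoc, Huv.
    pose proof (exp_mul_le_convex r (ln v - ln u)).
    pose proof (Rpower_gt0 u r). nra.
  - rewrite pw_nonpos by lra. pose proof (Rpower_gt0 u r). nra.
Qed.

Lemma le_pw_of_tangent_bounds (K S D r : R) : 0 < K -> 0 <= S -> 0 < r < 1 ->
  (forall u, 0 < u -> D <= K * (r * Rpower u (r - 1) * S + (1 - r) * Rpower u r)) ->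
  D <= K * pw S r.
Proof.
  intros HK [HS|<-] Hr HD.
  - rewrite pw_Rpower by lra. apply Rle_trans with (1 := HD S HS), Req_le.
    unfold Rminus. rewrite Rpower_plus, Rpower_Ropp, Rpower_1 by lra. field. lra.
  - rewrite pw_nonpos, Rmult_0_r by lra.
    destruct (Rle_or_lt D 0) as [HD0|HD0]; [exact HD0|].
    (* the tangent at u = (D / K)^(1 / r) gives D <= (1 - r) D *)
    specialize (HD (Rpower (D / K) (1 / r)) (Rpower_gt0 _ _)).
    rewrite !Rpower_mult in HD. replace (1 / r * r) with 1 in HD by (field; lra).
    rewrite Rpower_1 in HD by (apply Rdiv_lt_0_compat; lra).
    replace (K * (r * Rpower (D / K) (1 / r * (r - 1)) * 0 + (1 - r) * (D / K)))
      with ((1 - r) * D) in HD by (field; lra).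
    nra.
Qed.

Lemma Rabs_sub_le_of_derive_le (Phi Psi dPhi dPsi : R -> R) (a b : R) : a < b ->
  (forall t, a <= t <= b -> derivable_pt_lim Phi t (dPhi t)) ->
  (forall t, a <= t <= b -> derivable_pt_lim Psi t (dPsi t)) ->
  (forall t, a <= t <= b -> Rabs (dPhi t) <= dPsi t) ->
  Rabs (Phi b - Phi a) <= Psi b - Psi a.
Proof.
  intros Hab HPhi HPsi Hle.
  destruct (MVT_cor2 (fun t => Psi t - Phi t) (fun t => dPsi t - dPhi t) a b Hab)
    as [c [Hc Hcab]]; [intros t Ht; apply derivable_pt_lim_minus; auto|].
  destruct (MVT_cor2 (fun t => Psi t + Phi t) (fun t => dPsi t + dPhi t) a b Hab)
    as [d [Hd Hdab]]; [intros t Ht; apply derivable_pt_lim_plus; auto|].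
  assert (Ec := Hle c ltac:(lra)). assert (Ed := Hle d ltac:(lra)).
  apply Rabs_le_between in Ec. apply Rabs_le_between in Ed.
  apply Rabs_le. split; nra.
Qed.

Definition geo_path (a b t : R) : R := exp ((1 - t) * ln a + t * ln b).

Section GeoPath.

Variables a b : R.
Hypotheses (Ha : 0 < a) (Hb : 0 < b).

Lemma geo_path_gt0 (t : R) : 0 < geo_path a b t.
Proof. apply exp_pos. Qed.

Lemma geo_path_0 : geo_path a b 0 = a.
Proof. unfold geo_path. rewrite <- (exp_ln a) at 2 by lra. f_equal. ring. Qed.

Lemma geo_path_1 : geo_path a b 1 = b.
Proof. unfold geo_path. rewrite <- (exp_ln b) at 2 by lra. f_equal. ring. Qed.

Lemma is_derive_geo_path (t : R) :
  is_derive (geo_path a b) t ((ln b - ln a) * geo_path a b t).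
Proof. unfold geo_path. auto_derive; [exact I|]. ring_simplify. f_equal; f_equal; ring. Qed.

Lemma Rpower_geo_path (l t : R) :
  Rpower (geo_path a b t) l = exp (l * ((1 - t) * ln a + t * ln b)).
Proof. unfold Rpower, geo_path. now rewrite ln_exp. Qed.

Lemma pw_geo_path (m t : R) : 0 < m ->
  pw b t * pw (Rpower a (1 / m)) (m * (1 - t)) = geo_path a b t.
Proof.
  intros Hm. rewrite !pw_Rpower by (try apply Rpower_gt0; lra).
  rewrite Rpower_mult. unfold Rpower, geo_path. rewrite <- exp_plus.
  f_equal. field. lra.
Qed.

Lemma ga_convex_geo_path (alpha m c t : R) (h : R -> R) : 0 < m ->
  Rpower a (1 / m) <= c -> b <= c -> ga_convex alpha m c h -> 0 <= t <= 1 ->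
  h (geo_path a b t) <= pw t alpha * h b + m * (1 - pw t alpha) * h (Rpower a (1 / m)).
Proof.
  intros Hm Hac Hbc Hconv Ht. rewrite <- (pw_geo_path m t Hm).
  apply Hconv; [lra|split; [left; apply Rpower_gt0|exact Hac]|exact Ht].
Qed.

Lemma continuous_Rpower_geo_path (l t : R) :
  continuous (fun t => Rpower (geo_path a b t) l) t.
Proof.
  apply (continuous_ext (fun t => exp (l * ((1 - t) * ln a + t * ln b)))).
  { intros s. symmetry. apply Rpower_geo_path. }
  apply (ex_derive_continuous (V := R_NormedModule)). auto_derive. exact I.
Qed.

Lemma is_RInt_Rpower_geo_path (l : R) : l <> 0 -> a <> b ->
  is_RInt (fun t => Rpower (geo_path a b t) l) 0 1
    (logmean (Rpower a l) (Rpower b l)).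
Proof.
  intros Hl Hab.
  assert (Hln : ln b - ln a <> 0).
  { intros E. apply Hab, ln_inv; lra. }
  set (F t := exp (l * ((1 - t) * ln a + t * ln b)) / (l * (ln b - ln a))).
  replace (logmean (Rpower a l) (Rpower b l)) with (minus (F 1) (F 0)).
  - apply (is_RInt_derive (V := R_CompleteNormedModule)).
    + intros t _. unfold F. auto_derive; [exact I|].
      rewrite Rpower_geo_path. replace (1 + - t) with (1 - t) by ring.
      field. split; assumption.
    + intros t _. apply continuous_Rpower_geo_path.
  - unfold logmean, minus, plus, opp, F, Rpower. simpl.
    rewrite !ln_exp, !Rminus_0_r, Rminus_diag, !Rmult_0_l, !Rmult_1_l, Rplus_0_l, Rplus_0_r.
    field. rewrite <- Rmult_minus_distr_l.
    repeat split; try apply Rmult_integral_contrapositive; auto.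
Qed.

End GeoPath.

Section Majorant.

Variables a b alpha m : R.
Hypotheses (Ha : 0 < a) (Hab : a < b) (Halpha : 0 < alpha) (Hm : 0 < m).

Definition ga_majorant (l A B t : R) : R :=
  Rpower (geo_path a b t) l * (pw t alpha * B + m * (1 - pw t alpha) * A).

Lemma continuous_ga_majorant (l A B t : R) : continuous (ga_majorant l A B) t.
Proof.
  assert (Hw : continuous (fun t => Rpower (geo_path a b t) l) t)
    by apply continuous_Rpower_geo_path.
  assert (Hp : continuous (fun t => pw t alpha) t)
    by (apply continuity_pt_filterlim, continuity_pt_pw, Halpha).
  apply (continuous_mult (K := R_AbsRing)); [exact Hw|].
  apply (continuous_plus (V := R_NormedModule) (fun t => pw t alpha * B)
           (fun t => m * (1 - pw t alpha) * A));
    repeat first [apply (continuous_mult (K := R_AbsRing))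
                 |apply (continuous_minus (V := R_NormedModule))
                 |apply continuous_const|exact Hp].
Qed.

Lemma is_RInt_ga_majorant (l A B G : R) : l <> 0 ->
  is_RInt (G_integrand a b alpha l) 0 1 G ->
  is_RInt (ga_majorant l A B) 0 1
    (m * (logmean (Rpower a l) (Rpower b l) - G) * A + G * B).
Proof.
  intros Hl HG.
  assert (HL := is_RInt_Rpower_geo_path a b Ha ltac:(lra) l Hl ltac:(lra)).
  replace (m * (logmean (Rpower a l) (Rpower b l) - G) * A + G * B)
    with (plus (scal (B - m * A) G) (scal (m * A) (logmean (Rpower a l) (Rpower b l))))
    by (unfold plus, scal; simpl; unfold mult; simpl; ring).
  apply (is_RInt_ext (fun t => plus (scal (B - m * A) (G_integrand a b alpha l t))
                                     (scal (m * A) (Rpower (geo_path a b t) l)))).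
  - intros t _. unfold ga_majorant, G_integrand, plus, scal; simpl; unfold mult; simpl.
    rewrite Rpower_geo_path by lra. unfold Rpower.
    rewrite Rmult_assoc, <- exp_plus. replace (l * (1 - t) * ln a + l * t * ln b)
      with (l * ((1 - t) * ln a + t * ln b)) by ring. ring.
  - apply (is_RInt_plus (V := R_NormedModule)); apply (is_RInt_scal (V := R_NormedModule));
      assumption.
Qed.

Lemma ga_convex_majorant_bound (c q t : R) (g : R -> R) : 0 < q ->
  Rpower a (1 / m) <= c -> b <= c -> ga_convex alpha m c (fun x => pw (Rabs (g x)) q) ->
  0 <= t <= 1 ->
  let M := ga_majorant (3 * q) (pw (Rabs (g (Rpower a (1 / m)))) q) (pw (Rabs (g b)) q) in
  0 <= M t /\ geo_path a b t ^ 3 * Rabs (g (geo_path a b t)) <= pw (M t) (1 / q).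
Proof.
  intros Hq Hac Hbc Hconv Ht M.
  replace (M t) with (Rpower (geo_path a b t ^ 3) q *
    (pw t alpha * pw (Rabs (g b)) q + m * (1 - pw t alpha) * pw (Rabs (g (Rpower a (1 / m)))) q)).
  - apply mul_le_pw_inv; [apply pow_lt, geo_path_gt0|apply Rabs_pos|exact Hq|].
    apply (ga_convex_geo_path a b) with (c := c) (h := fun x => pw (Rabs (g x)) q);
      assumption || lra.
  - unfold M, ga_majorant. rewrite <- Rpower_pow, Rpower_mult by apply geo_path_gt0.
    replace (INR 3 * q) with (3 * q) by (simpl; ring). reflexivity.
Qed.

End Majorant.

Section IntegrationByParts.

Variables (f f' : R -> R) (a b : R).
Hypothesis Hf : forall x, 0 < x -> derivable_pt_lim f x (f' x).
Hypotheses (Ha : 0 < a) (Hab : a < b).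

Lemma is_derive_parts_primitive (x : R) : 0 < x ->
  is_derive (fun x => x ^ 2 * f x / 2 - RInt (fun s => s * f s) a x) x (x ^ 2 * f' x / 2).
Proof.
  intros Hx.
  assert (Hdf : forall y, 0 < y -> is_derive f y (f' y))
    by (intros y Hy; apply is_derive_Reals, Hf, Hy).
  assert (Hcont : forall y, 0 < y -> continuous (fun s => s * f s) y).
  { intros y Hy. apply (continuous_mult (K := R_AbsRing) (fun s => s) f).
    - apply continuous_id.
    - apply (ex_derive_continuous (V := R_NormedModule)). exists (f' y). auto. }
  auto_derive.
  - split; [exists (f' x); auto|]. split.
    + apply (ex_RInt_continuous (V := R_CompleteNormedModule)). intros z Hz.
      apply Hcont. pose proof (Rmin_pos a x Ha Hx). lra.
    + split; [|exact I].
      apply locally_interval with (Finite 0) p_infty; simpl; auto.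
      intros y Hy _. apply continuity_pt_filterlim, Hcont, Hy.
  - replace (Derive (fun y => f y) x) with (f' x) by (symmetry; apply is_derive_unique; auto).
    field.
Qed.

Lemma parts_integral_pw_bound (M : R -> R) (r : R) : 0 < r < 1 ->
  (forall t, continuous M t) ->
  (forall t, 0 <= t <= 1 -> 0 <= M t /\
     geo_path a b t ^ 3 * Rabs (f' (geo_path a b t)) <= pw (M t) r) ->
  Rabs ((b ^ 2 * f b - a ^ 2 * f a) / 2 - RInt (fun s => s * f s) a b)
    <= (ln b - ln a) / 2 * pw (RInt M 0 1) r.
Proof.
  intros Hr HMc HM.
  set (K := (ln b - ln a) / 2).
  assert (HK : 0 < K) by (assert (ln a < ln b) by (apply ln_increasing; lra); unfold K; lra).
  assert (HMint : forall t, ex_RInt M 0 t)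
    by (intros t; apply (ex_RInt_continuous (V := R_CompleteNormedModule)); auto).
  apply le_pw_of_tangent_bounds; [exact HK| |exact Hr|].
  { apply RInt_ge_0; [lra|auto|]. intros t Ht. apply HM. lra. }
  intros u Hu.
  set (c1 := r * Rpower u (r - 1)). set (c2 := (1 - r) * Rpower u r).
  set (X := geo_path a b).
  set (Phi t := X t ^ 2 * f (X t) / 2 - RInt (fun s => s * f s) a (X t)).
  set (Psi t := K * (c1 * RInt M 0 t + c2 * t)).
  replace ((b ^ 2 * f b - a ^ 2 * f a) / 2 - RInt (fun s => s * f s) a b)
    with (Phi 1 - Phi 0).
  2:{ unfold Phi, X. rewrite geo_path_0, geo_path_1, RInt_point by lra.
      unfold zero; simpl. field. }
  replace (K * (c1 * RInt M 0 1 + c2)) with (Psi 1 - Psi 0).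
  2:{ unfold Psi. rewrite RInt_point. unfold zero, c2; simpl. ring. }
  apply (Rabs_sub_le_of_derive_le Phi Psi
           (fun t => K * (X t ^ 3 * f' (X t))) (fun t => K * (c1 * M t + c2)));
    [lra| intros t Ht; apply is_derive_Reals..|].
  - replace (K * (X t ^ 3 * f' (X t)))
      with (scal ((ln b - ln a) * X t) (X t ^ 2 * f' (X t) / 2))
      by (unfold scal, K; simpl; unfold mult; simpl; field).
    apply (is_derive_comp (fun x => x ^ 2 * f x / 2 - RInt (fun s => s * f s) a x) X).
    + apply is_derive_parts_primitive, geo_path_gt0.
    + apply is_derive_geo_path.
  - unfold Psi. auto_derive.
    + split; [apply HMint|]. split; [|exact I].
      apply filter_forall. intros y. apply continuity_pt_filterlim, HMc.
    + ring.
  - intros t Ht. destruct (HM t Ht) as [HM0 Hbound].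
    assert (HX : 0 < X t) by apply geo_path_gt0.
    rewrite !Rabs_mult, (Rabs_pos_eq K), (Rabs_pos_eq (X t ^ 3)) by (try apply pow_le; lra).
    apply Rmult_le_compat_l; [lra|].
    apply Rle_trans with (1 := Hbound), pw_le_tangent; lra.
Qed.

End IntegrationByParts.

Theorem theorem3p3
  (f f' : R -> R) (a b alpha m q : R)
  (Hdiff : diff_on_nonneg f f')
  (Ha : 0 < a) (Hab : a < b)
  (Halpha : 0 < alpha <= 1) (Hm : 0 < m <= 1) (Hq : 1 < q)
  (Hconv : ga_convex alpha m (Rmax (Rpower a (1 / m)) b)
             (fun x => pw (Rabs (f' x)) q))
  (prG : Riemann_integrable (G_integrand a b alpha (3 * q)) 0 1)
  (prI : Riemann_integrable (fun x => x * f x) a b) :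
  let G := RiemannInt prG in
  Rabs ((b ^ 2 * f b - a ^ 2 * f a) / 2 - RiemannInt prI)
  <= (ln b - ln a) / 2 *
     pw (m * (logmean (Rpower a (3 * q)) (Rpower b (3 * q)) - G)
           * pw (Rabs (f' (Rpower a (1 / m)))) q
         + G * pw (Rabs (f' b)) q) (1 / q).
Proof.
  intros G. destruct Hdiff as [_ Hf].
  assert (HG : is_RInt (G_integrand a b alpha (3 * q)) 0 1 G).
  { unfold G. rewrite <- RInt_Reals.
    apply (RInt_correct (V := R_CompleteNormedModule)), ex_RInt_Reals_1, prG. }
  rewrite <- (RInt_Reals _ _ _ prI),
    <- (is_RInt_unique _ _ _ _ (is_RInt_ga_majorant a b alpha m Ha Hab (3 * q)
          (pw (Rabs (f' (Rpower a (1 / m)))) q) (pw (Rabs (f' b)) q) G ltac:(lra) HG)).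
  apply (parts_integral_pw_bound f f'); [exact Hf|lra|lra| | |].
  - split; [apply Rdiv_lt_0_compat; lra|].
    apply (Rmult_lt_reg_r q); [lra|]. unfold Rdiv. rewrite Rmult_assoc, Rinv_l; lra.
  - intros t. apply continuous_ga_majorant; lra.
  - intros t Ht. apply ga_convex_majorant_bound with (c := Rmax (Rpower a (1 / m)) b);
      auto using Rmax_l, Rmax_r; lra.
Qed.
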